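(* Let $(M,g)$ be a Lorentzian manifold of dimension $m\ge 3$ which is $k$ Osserman for some $1\le k\le m-1$. Then $(M,g)$ has constant sectional curvature.
   Context: Let $R$ be the curvature tensor of the Levi-Civita connection of $(M,g)$, viewed as a $4$-tensor, and for $x\in T_PM$ let $\mathcal{J}_R(x)$ be the Jacobi operator defined by $g(\mathcal{J}_R(x)y,w)=R(y,x,x,w)$. For a non-degenerate $k$-dimensional subspace $\sigma\subset T_PM$ with orthonormal basis $\{e_1,\dots,e_k\}$, $\mathcal{J}_R(\sigma)=\sum_{i=1}^k g(e_i,e_i)\mathcal{J}_R(e_i)$. $(M,g)$ is $k$ Osserman if the eigenvalues of $\mathcal{J}_R(\sigma)$ are constant on the Grassmannian of non-degenerate $k$-planes in $TM$. *)

(* Pointwise model of a Lorentzian manifold. *)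
From HB Require Import structures.
From mathcomp Require Import all_boot all_order all_algebra.
From mathcomp Require Import complex reals.
Set Implicit Arguments. Unset Strict Implicit. Unset Printing Implicit Defensive.
Import Order.TTheory GRing.Theory Num.Theory.
Local Open Scope ring_scope.

Section Defs.
Variables (R : realType) (m : nat).

Definition minkowski : 'M[R]_m :=
  \matrix_(i, j) (if i == j then (if val i == 0%N then -1 else 1) else 0).

Definition gmet (u v : 'rV[R]_m) : R := (u *m minkowski *m v^T) ord0 ord0.

Definition tensor4 := 'I_m -> 'I_m -> 'I_m -> 'I_m -> R.

Definition eval4 (Rc : tensor4) (x y z w : 'rV[R]_m) : R :=
  \sum_i \sum_j \sum_k \sum_l x 0 i * y 0 j * z 0 k * w 0 l * Rc i j k l.

Definition alg_curv (Rc : tensor4) : Prop :=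
  [/\ forall i j k l, Rc i j k l = - Rc j i k l,
      forall i j k l, Rc i j k l = - Rc i j l k,
      forall i j k l, Rc i j k l = Rc k l i j
    & forall i j k l, Rc i j k l + Rc j k i l + Rc k i j l = 0].

(* Jacobi operator J(x), acting on row vectors y |-> y *m J(x), characterized by
   g(J(x) y, w) = R(y,x,x,w); explicitly J(x) = B(x) * eta^{-1}, eta^{-1}=eta. *)
Definition jacobi (Rc : tensor4) (x : 'rV[R]_m) : 'M[R]_m :=
  (\matrix_(i, l) eval4 Rc (delta_mx 0 i) x x (delta_mx 0 l)) *m minkowski.

(* Rows of E form an orthonormal basis of a non-degenerate k-plane. *)
Definition orthonormal_frame (k : nat) (E : 'M[R]_(k, m)) : Prop :=
  let G := E *m minkowski *m E^T in
  (forall i j, i != j -> G i j = 0) /\ (forall i, G i i = 1 \/ G i i = -1).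

Definition jacobi_plane (Rc : tensor4) (k : nat) (E : 'M[R]_(k, m)) : 'M[R]_m :=
  \sum_(i < k) gmet (row i E) (row i E) *: jacobi Rc (row i E).

Definition eigenvalueC (A : 'M[R]_m) (z : R[i]) : bool :=
  root (map_poly (fun x : R => (x%:C)%C) (char_poly A)) z.

Definition k_osserman (M : Type) (Rm : M -> tensor4) (k : nat) : Prop :=
  forall (P Q : M) (E F : 'M[R]_(k, m)),
    orthonormal_frame E -> orthonormal_frame F ->
    forall z : R[i], eigenvalueC (jacobi_plane (Rm P) E) z =
                     eigenvalueC (jacobi_plane (Rm Q) F) z.

Definition plane_det (x y : 'rV[R]_m) : R :=
  gmet x x * gmet y y - gmet x y ^+ 2.

Definition sectional_curvature (Rc : tensor4) (x y : 'rV[R]_m) : R :=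
  eval4 Rc x y y x / plane_det x y.

Definition constant_sectional_curvature (M : Type) (Rm : M -> tensor4) : Prop :=
  exists c : R, forall (P : M) (x y : 'rV[R]_m),
    plane_det x y != 0 -> sectional_curvature (Rm P) x y = c.

End Defs.

(* Fix a point and a Lorentz frame f_0, ..., f_(m-1), with f_0 timelike. The k-frames
   (cosh t f_0 + sinh t f_1, f_2, ..., f_k) are orthonormal and, with l = e^t, their
   Jacobi operator is l^2 P + Q + l^-2 S where P = - J(u) / 4 for the null vector
   u = f_0 + f_1. The k-Osserman condition fixes the spectrum, so tr J(sigma)^2 stays
   bounded and tr P^2 = 0; in the frame, tr J(u)^2 is the sum of the squares of
   R(f_a, u, u, f_b) for a, b >= 2, which therefore vanish. Relabelling the frame and
   rotating spatial pairs turns this into enough linear identities to force R = c G at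
   each point, where c = R(e_1, e_2, e_2, e_1) and G is the curvature tensor of constant
   curvature 1. Then J(sigma) = c (k - pi_sigma) has the eigenvalues k c and (k - 1) c,
   and comparing spectra at two points shows that c is constant. *)

From HB Require Import structures.
From mathcomp Require Import all_boot all_order all_algebra fingroup perm.
From mathcomp Require Import complex reals.
From mathcomp Require Import ring lra zify.
From Stdlib Require Import Classical.
Import Order.TTheory GRing.Theory Num.Theory.
Local Open Scope ring_scope.

Set Implicit Arguments. Unset Strict Implicit. Unset Printing Implicit Defensive.

Section Minkowski.
Variables (R : realType) (m : nat).
Local Notation eta := (minkowski R m).
Local Notation e i := (delta_mx 0 i : 'rV[R]_m).
Implicit Types (u v w x y z : 'rV[R]_m) (T : tensor4 R m).

Definition msign (i : 'I_m) : R := if val i == 0%N then -1 else 1.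

Lemma msign_sqr i : msign i * msign i = 1.
Proof. by rewrite /msign; case: ifP => _; rewrite ?mulrNN mulr1. Qed.

Lemma msign_spacelike (i : 'I_m) : (i : nat) != 0%N -> msign i = 1.
Proof. by rewrite /msign => /negPf ->. Qed.

Lemma minkowskiE i j : eta i j = if i == j then msign i else 0.
Proof. by rewrite mxE. Qed.

Lemma minkowski_sym i j : eta i j = eta j i.
Proof. by rewrite !minkowskiE eq_sym; case: eqP => // ->. Qed.

Lemma mulmx_minkowski p (A : 'M[R]_(p, m)) i j : (A *m eta) i j = A i j * msign j.
Proof.
rewrite mxE (bigD1 j) //= big1 ?addr0; first by rewrite minkowskiE eqxx.
by move=> l /negPf lj; rewrite minkowskiE lj mulr0.
Qed.

Lemma minkowski_invol : eta *m eta = 1%:M.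
Proof.
apply/matrixP=> i j; rewrite mulmx_minkowski minkowskiE !mxE.
by case: eqP => [->|_]; rewrite ?msign_sqr ?mul0r.
Qed.

Lemma gmetE u v : gmet u v = \sum_i u 0 i * msign i * v 0 i.
Proof. by rewrite /gmet mxE; apply: eq_bigr => j _; rewrite mulmx_minkowski mxE. Qed.

Lemma gmetC u v : gmet u v = gmet v u.
Proof. by rewrite !gmetE; apply: eq_bigr => i _; ring. Qed.

Lemma gmetDl u u' v : gmet (u + u') v = gmet u v + gmet u' v.
Proof. by rewrite !gmetE -big_split /=; apply: eq_bigr => i _; rewrite mxE; ring. Qed.

Lemma gmetZl a u v : gmet (a *: u) v = a * gmet u v.
Proof. by rewrite !gmetE mulr_sumr; apply: eq_bigr => i _; rewrite mxE; ring. Qed.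

Lemma gmetDr u v v' : gmet u (v + v') = gmet u v + gmet u v'.
Proof. by rewrite gmetC gmetDl !(gmetC u). Qed.

Lemma gmetZr a u v : gmet u (a *: v) = a * gmet u v.
Proof. by rewrite gmetC gmetZl gmetC. Qed.

Lemma gmetNl u v : gmet (- u) v = - gmet u v.
Proof. by rewrite -scaleN1r gmetZl mulN1r. Qed.

Lemma gmetNr u v : gmet u (- v) = - gmet u v.
Proof. by rewrite -scaleN1r gmetZr mulN1r. Qed.

Definition gmet_lin := (gmetDl, gmetDr, gmetNl, gmetNr, gmetZl, gmetZr).

Lemma gmet_delta i j : gmet (e i) (e j) = if i == j then msign i else 0.
Proof.
rewrite gmetE (bigD1 i) //= big1 ?addr0 => [|l /negPf li]; last first.
  by rewrite mxE eqxx /= li !mul0r.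
by rewrite !mxE !eqxx /= mul1r; case: eqP => _; rewrite ?mulr1 ?mulr0.
Qed.

Lemma gram_mxE p (E : 'M[R]_(p, m)) r s :
  (E *m eta *m E^T) r s = gmet (row r E) (row s E).
Proof.
rewrite /gmet !mxE; apply: eq_bigr => j _; rewrite !mxE; congr (_ * _).
by apply: eq_bigr => i _; rewrite !mxE.
Qed.

Ltac eval4_multilinear :=
  rewrite /eval4 ?mulr_sumr -?big_split /=;
  do 4 (apply: eq_bigr => ? _; rewrite ?mulr_sumr -?big_split /=);
  rewrite ?mxE; ring.

Lemma eval4D1 T x x' y z w :
  eval4 T (x + x') y z w = eval4 T x y z w + eval4 T x' y z w.
Proof. eval4_multilinear. Qed.
Lemma eval4Z1 T a x y z w : eval4 T (a *: x) y z w = a * eval4 T x y z w.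
Proof. eval4_multilinear. Qed.
Lemma eval4D2 T x y y' z w :
  eval4 T x (y + y') z w = eval4 T x y z w + eval4 T x y' z w.
Proof. eval4_multilinear. Qed.
Lemma eval4Z2 T a x y z w : eval4 T x (a *: y) z w = a * eval4 T x y z w.
Proof. eval4_multilinear. Qed.
Lemma eval4D3 T x y z z' w :
  eval4 T x y (z + z') w = eval4 T x y z w + eval4 T x y z' w.
Proof. eval4_multilinear. Qed.
Lemma eval4Z3 T a x y z w : eval4 T x y (a *: z) w = a * eval4 T x y z w.
Proof. eval4_multilinear. Qed.
Lemma eval4D4 T x y z w w' :
  eval4 T x y z (w + w') = eval4 T x y z w + eval4 T x y z w'.
Proof. eval4_multilinear. Qed.
Lemma eval4Z4 T a x y z w : eval4 T x y z (a *: w) = a * eval4 T x y z w.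
Proof. eval4_multilinear. Qed.

Definition eval4_lin :=
  (eval4D1, eval4Z1, eval4D2, eval4Z2, eval4D3, eval4Z3, eval4D4, eval4Z4).

Lemma eval4_nested T x y z w : eval4 T x y z w =
  \sum_i x 0 i * (\sum_j y 0 j * (\sum_k z 0 k * (\sum_l w 0 l * T i j k l))).
Proof.
rewrite /eval4; apply: eq_bigr => i _; rewrite mulr_sumr; apply: eq_bigr => j _.
rewrite mulrA mulr_sumr; apply: eq_bigr => k _.
by rewrite mulrA mulr_sumr; apply: eq_bigr => l _; rewrite !mulrA.
Qed.

Lemma eval4_delta T a b c d : eval4 T (e a) (e b) (e c) (e d) = T a b c d.
Proof.
have collapse (F : 'I_m -> R) i : \sum_j (e i) 0 j * F j = F i.
  rewrite (bigD1 i) //= big1 ?addr0 => [|j /negPf ji]; first by rewrite !mxE !eqxx mul1r.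
  by rewrite mxE eqxx /= ji mul0r.
by rewrite eval4_nested !collapse.
Qed.

Lemma linear_sum_rV (F : 'rV[R]_m -> R) :
  (forall x y, F (x + y) = F x + F y) -> (forall a x, F (a *: x) = a * F x) ->
  forall (I : finType) (c : I -> R) (v : I -> 'rV[R]_m),
  F (\sum_i c i *: v i) = \sum_i c i * F (v i).
Proof.
move=> FD FZ I c v; have F0 : F 0 = 0 by rewrite -(scale0r 0) FZ mul0r.
by elim/big_rec2: _ => [//|i y1 y2 _ <-]; rewrite FD FZ.
Qed.

Lemma eval4_expand1 T x y z w :
  eval4 T x y z w = \sum_i x 0 i * eval4 T (e i) y z w.
Proof.
rewrite {1}(row_sum_delta x) (@linear_sum_rV (fun v => eval4 T v y z w)) // => [? ?|? ?].
  by rewrite eval4_lin.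
by rewrite eval4_lin.
Qed.

Lemma eval4_expand4 T x y z w :
  eval4 T x y z w = \sum_l w 0 l * eval4 T x y z (e l).
Proof.
rewrite {1}(row_sum_delta w) (@linear_sum_rV (eval4 T x y z)) // => [? ?|? ?].
  by rewrite eval4_lin.
by rewrite eval4_lin.
Qed.

Lemma jacobiE T x i l : jacobi T x i l = eval4 T (e i) x x (e l) * msign l.
Proof. by rewrite /jacobi mulmx_minkowski mxE. Qed.

Lemma jacobi_planeE T p (E : 'M[R]_(p, m)) i l :
  jacobi_plane T E i l = \sum_r gmet (row r E) (row r E) * jacobi T (row r E) i l.
Proof. by rewrite /jacobi_plane summxE; apply: eq_bigr => r _; rewrite mxE. Qed.

Section AlgebraicCurvature.
Variables (T : tensor4 R m) (HT : alg_curv T).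

Lemma eval4_antisym12 x y z w : eval4 T x y z w = - eval4 T y x z w.
Proof.
case: HT => A12 _ _ _; rewrite /eval4 [in RHS]exchange_big -sumrN.
apply: eq_bigr => i _; rewrite -sumrN; apply: eq_bigr => j _.
rewrite -sumrN; apply: eq_bigr => k _; rewrite -sumrN; apply: eq_bigr => l _.
rewrite (A12 i j); ring.
Qed.

Lemma eval4_antisym34 x y z w : eval4 T x y z w = - eval4 T x y w z.
Proof.
case: HT => _ A34 _ _; rewrite /eval4 -sumrN.
apply: eq_bigr => i _; rewrite -sumrN; apply: eq_bigr => j _.
rewrite exchange_big -sumrN; apply: eq_bigr => k _; rewrite -sumrN.
apply: eq_bigr => l _; rewrite (A34 i j k l); ring.
Qed.

Lemma eval4_pair_sym x y z w : eval4 T x y z w = eval4 T z w x y.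
Proof.
case: HT => _ _ Apair _; rewrite /eval4.
under [RHS]eq_bigr => i _ do rewrite exchange_big.
under [RHS]eq_bigr => i _ do under eq_bigr => j _ do rewrite exchange_big.
rewrite [RHS]exchange_big.
under [RHS]eq_bigr => k _ do rewrite exchange_big.
apply: eq_bigr => i _; apply: eq_bigr => j _; apply: eq_bigr => k _.
by apply: eq_bigr => l _; rewrite (Apair i j k l); ring.
Qed.

Lemma eval4_jacobi_sym x y z : eval4 T x z z y = eval4 T y z z x.
Proof. by rewrite eval4_pair_sym eval4_antisym12 eval4_antisym34 opprK. Qed.

Lemma eval4_diag12 x y z : eval4 T x x y z = 0.
Proof.
have /eqP := eval4_antisym12 x x y z.
by rewrite -addr_eq0 -mulr2n mulrn_eq0 => /eqP.
Qed.

End AlgebraicCurvature.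

End Minkowski.

Arguments msign {R m} i.
Arguments msign_sqr {R m} i.
Arguments msign_spacelike {R m} i.
Arguments minkowskiE {R m} i j.
Arguments minkowski_sym {R m} i j.

Lemma msign_neq_ord0 (R : realType) n (i : 'I_n.+1) : i != ord0 -> msign i = 1 :> R.
Proof. by move=> i0; apply: msign_spacelike; apply: contra i0 => /eqP i0; apply/eqP/ord_inj. Qed.

Section SpectralBound.
Variable C : numClosedFieldType.

Lemma eigenvalue_mulmx_self n (A : 'M[C]_n) w :
  eigenvalue (A *m A) w -> exists2 z, eigenvalue A z & z ^+ 2 = w.
Proof.
move/eigenvalueP=> [v Hv vnz]; pose z := sqrtC w.
have zw : z ^+ 2 = w by exact: sqrtCK.
have factor : (A - z%:M) *m (A + z%:M) = A *m A - w%:M.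
  rewrite mulmxBl !mulmxDr mul_mx_scalar mul_scalar_mx -scalar_mxM -expr2 zw.
  by rewrite opprD addrA addrK.
set u := v *m (A - z%:M).
have Hu : u *m (A + z%:M) = 0.
  by rewrite /u -mulmxA factor mulmxBr Hv mul_mx_scalar subrr.
have [u0|unz] := eqVneq u 0.
  exists z => //; apply/eigenvalueP; exists v => //.
  by apply/eqP; rewrite -subr_eq0 -mul_mx_scalar -mulmxBr -/u u0.
exists (- z); last by rewrite sqrrN.
apply/eigenvalueP; exists u => //.
move: Hu; rewrite mulmxDr mul_mx_scalar => /eqP; rewrite addr_eq0 => /eqP ->.
by rewrite scaleNr.
Qed.

Lemma mxtrace_sum_roots n (A : 'M[C]_n.+1) (rs : seq C) :
  char_poly A = \prod_(w <- rs) ('X - w%:P) ->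
  size rs = n.+1 /\ \tr A = \sum_(w <- rs) w.
Proof.
move=> chiA; have szrs : size rs = n.+1.
  by have := size_char_poly A; rewrite chiA size_prod_XsubC => -[].
split=> //; have /eqP := char_poly_trace A (ltn0Sn n).
by rewrite chiA -{1}szrs coefPn_prod_XsubC ?szrs // eqr_opp => /eqP.
Qed.

(* Each eigenvalue of A *m A is the square of a root of p. *)
Lemma mxtrace_sqr_bounded n (p : {poly C}) : p != 0 -> exists b : C,
  forall A : 'M[C]_n.+1, (forall z, eigenvalue A z -> root p z) ->
  `|\tr (A *m A)| <= b.
Proof.
move=> p_neq0; have [rsp p_split] := closed_field_poly_normal p.
pose b := \sum_(y <- rsp) `|y| ^+ 2.
exists (b *+ n.+1) => A eigA.
have [rs] := closed_field_poly_normal (char_poly (A *m A)).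
rewrite (monicP (char_poly_monic _)) scale1r => chiAA.
have [size_rs ->] := mxtrace_sum_roots chiAA.
have root_le w : w \in rs -> `|w| <= b.
  move=> w_rs; have : root (char_poly (A *m A)) w by rewrite chiAA root_prod_XsubC.
  rewrite -eigenvalue_root_char => /eigenvalue_mulmx_self [z /eigA].
  rewrite p_split rootZ ?lead_coef_eq0 // root_prod_XsubC => z_rsp <-.
  rewrite normrX /b (perm_big _ (perm_to_rem z_rsp)) big_cons lerDl.
  by rewrite sumr_ge0 // => y _; rewrite exprn_ge0.
have sum_le s : (forall w, w \in s -> `|w| <= b) -> \sum_(w <- s) `|w| <= b *+ size s.
  elim: s => [|w s IH] le_b; first by rewrite big_nil.
  rewrite big_cons mulrS lerD ?le_b ?mem_head // IH // => y ys.
  by rewrite le_b // inE ys orbT.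
by rewrite -size_rs (le_trans (ler_norm_sum _ _ _)) ?sum_le.
Qed.

End SpectralBound.

Lemma eigenvalueC_map (R : realType) m (A : 'M[R]_m) z :
  eigenvalueC A z = eigenvalue (map_mx (real_complex R) A) z.
Proof. by rewrite eigenvalue_root_char /eigenvalueC map_char_poly. Qed.

Lemma mxtrace_sqr_bounded_real (R : realType) n (p : {poly R[i]}) : p != 0 ->
  exists b : R, forall A : 'M[R]_n.+1, (forall z, eigenvalueC A z -> root p z) ->
  `|\tr (A *m A)| <= b.
Proof.
move=> /(mxtrace_sqr_bounded n) [b bound]; exists (complex.Re b) => A eigA.
have : `|(\tr (A *m A))%:C|%C <= b.
  rewrite -trace_map_mx map_mxM; apply: bound => z.
  by rewrite -eigenvalueC_map; apply: eigA.
by move/(le_trans (normc_ge_Re _)); rewrite lecE => /andP[].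
Qed.

Section LaurentGrowth.
Variable R : realFieldType.

Lemma quartic_bounded_lead_le0 (c4 c2 B : R) :
  (forall l, 1 <= l -> l ^+ 4 * c4 + l ^+ 2 * c2 <= B) -> c4 <= 0.
Proof.
move=> bounded; rewrite leNgt; apply/negP => c4_gt0.
pose l := 1 + (`|B| + `|c2|) / c4.
have l_ge1 : 1 <= l by rewrite lerDl divr_ge0 ?addr_ge0 // ltW.
have lc4 : l * c4 = c4 + `|B| + `|c2| by rewrite mulrDl mul1r divfK ?gt_eqF ?addrA.
have l2_ge1 : 1 <= l ^+ 2 by rewrite expr_ge1 // (le_trans ler01).
have lc4_le : l * c4 <= l ^+ 2 * c4.
  by rewrite ler_pM2r // expr2 ler_peMl // (le_trans ler01).
have c2_ge : - `|c2| <= c2 by rewrite lerNl ler_normr lexx orbT.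
have inner_gt : `|B| < l ^+ 2 * c4 + c2 by lra.
have outer_ge : l ^+ 2 * c4 + c2 <= l ^+ 2 * (l ^+ 2 * c4 + c2).
  by rewrite ler_peMl // (le_trans _ (ltW inner_gt)).
have := bounded l l_ge1; have := ler_norm B.
have -> : l ^+ 4 * c4 + l ^+ 2 * c2 = l ^+ 2 * (l ^+ 2 * c4 + c2) by ring.
lra.
Qed.

Lemma laurent_bounded_lead_eq0 (c4 c2 c0 d2 d4 b : R) : 0 <= c4 ->
  (forall l, 1 <= l ->
     `|l ^+ 4 * c4 + l ^+ 2 * c2 + c0 + l^-1 ^+ 2 * d2 + l^-1 ^+ 4 * d4| <= b) ->
  c4 = 0.
Proof.
move=> c4_ge0 bounded; apply/le_anti; rewrite c4_ge0 andbT.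
apply: (@quartic_bounded_lead_le0 _ c2 (b + `|c0| + `|d2| + `|d4|)) => l l_ge1.
have small_term (t d : R) : 0 <= t <= 1 -> - `|d| <= t * d.
  move=> /andP[t_ge0 t_le1]; have [d_ge0|d_lt0] := lerP 0 d.
    by rewrite (le_trans _ (mulr_ge0 t_ge0 d_ge0)) // oppr_le0.
  rewrite ltr0_norm // opprK; nra.
have t_unit k : 0 <= l^-1 ^+ k <= 1.
  have l_gt0 : 0 < l := lt_le_trans ltr01 l_ge1.
  have /andP[t_ge0 t_le1] : 0 <= l^-1 <= 1 by rewrite invr_ge0 invf_le1 // ltW.
  by rewrite exprn_ge0 // exprn_ile1.
have := small_term _ d2 (t_unit 2%N); have := small_term _ d4 (t_unit 4%N).
have c0_ge : - `|c0| <= c0 by rewrite lerNl ler_normr lexx orbT.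
move: (bounded l l_ge1); rewrite ler_norml => /andP[_]; lra.
Qed.

Lemma mxtrace_laurent_sqr_eq0 n (P Q S : 'M[R]_n) b : 0 <= \tr (P *m P) ->
  (forall l, 1 <= l -> let A := l ^+ 2 *: P + Q + l^-1 ^+ 2 *: S in
     `|\tr (A *m A)| <= b) ->
  \tr (P *m P) = 0.
Proof.
move=> trPP_ge0 bounded.
apply: (@laurent_bounded_lead_eq0 _ (\tr (P *m Q) + \tr (Q *m P))
  (\tr (Q *m Q) + \tr (P *m S) + \tr (S *m P)) (\tr (Q *m S) + \tr (S *m Q))
  (\tr (S *m S)) b trPP_ge0) => l l_ge1.
have l_neq0 : l != 0 by rewrite gt_eqF // (lt_le_trans ltr01 l_ge1).
apply: le_trans (bounded l l_ge1); rewrite le_eqVlt; apply/orP; left; apply/eqP.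
congr `|_|; rewrite !(mulmxDl, mulmxDr) -!scalemxAl -!scalemxAr !(mxtraceD, mxtraceZ).
have l4 : l ^+ 4 = l ^+ 2 * l ^+ 2 by rewrite -exprD.
have t4 : l^-1 ^+ 4 = l^-1 ^+ 2 * l^-1 ^+ 2 by rewrite -exprD.
by rewrite l4 t4; field.
Qed.

End LaurentGrowth.

Definition lorentz_frame (R : realType) m (f : 'I_m -> 'rV[R]_m) :=
  forall a b, gmet (f a) (f b) = if a == b then msign a else 0.

Lemma inord_succ_val n k (r : 'I_k.+1) : (k <= n)%N -> (inord r.+1 : 'I_n.+2) = r.+1 :> nat.
Proof. by move=> kn; rewrite inordK //; have := ltn_ord r; lia. Qed.

Section JacobiQuadratic.
Variables (R : realType) (m : nat) (T : tensor4 R m).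
Local Notation eta := (minkowski R m).
Local Notation e i := (delta_mx 0 i : 'rV[R]_m).

Definition jacobi_mixed (x y : 'rV[R]_m) : 'M[R]_m :=
  (\matrix_(i, l) (eval4 T (e i) x y (e l) + eval4 T (e i) y x (e l))) *m eta.

Lemma jacobi_combination a b x y : jacobi T (a *: x + b *: y) =
  a ^+ 2 *: jacobi T x + (a * b) *: jacobi_mixed x y + b ^+ 2 *: jacobi T y.
Proof.
rewrite /jacobi_mixed /jacobi !scalemxAl -!mulmxDl; congr (_ *m _).
by apply/matrixP => i l; rewrite !mxE !eval4_lin; ring.
Qed.

End JacobiQuadratic.

Section LorentzFrame.
Variables (R : realType) (m : nat) (f : 'I_m -> 'rV[R]_m).
Hypothesis Hf : lorentz_frame f.
Local Notation eta := (minkowski R m).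
Local Notation e i := (delta_mx 0 i : 'rV[R]_m).

Definition frame_mx : 'M[R]_m := \matrix_a f a.

Lemma frame_mx_gram : frame_mx *m eta *m frame_mx^T = eta.
Proof. by apply/matrixP=> a b; rewrite gram_mxE !rowK Hf minkowskiE. Qed.

Lemma frame_mx_gram_tr : frame_mx^T *m eta *m frame_mx = eta.
Proof.
have inv : frame_mx *m (eta *m frame_mx^T *m eta) = 1%:M.
  by rewrite !mulmxA frame_mx_gram minkowski_invol.
have := mulmx1C inv; rewrite -!mulmxA => inv'.
have : eta *m (eta *m (frame_mx^T *m (eta *m frame_mx))) = eta *m 1%:M by rewrite inv'.
by rewrite mulmxA minkowski_invol mul1mx mulmx1 !mulmxA.
Qed.

Lemma mxtrace_sqr_frame (B : 'M[R]_m) :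
  let A := frame_mx *m B *m frame_mx^T *m eta in
  \tr (A *m A) = \tr (B *m eta *m (B *m eta)).
Proof.
have gramK p (X : 'M[R]_(p, m)) : X *m frame_mx^T *m eta *m frame_mx = X *m eta.
  by rewrite -!mulmxA [frame_mx^T *m (eta *m frame_mx)]mulmxA frame_mx_gram_tr.
by rewrite /= -!mulmxA mxtrace_mulC !mulmxA !gramK -!mulmxA.
Qed.

Lemma frame_mx_bilinear T x y :
  \matrix_(a, b) eval4 T (f a) x y (f b) =
  frame_mx *m (\matrix_(i, l) eval4 T (e i) x y (e l)) *m frame_mx^T.
Proof.
apply/matrixP=> a b; rewrite !mxE eval4_expand1.
under eq_bigr => i _ do rewrite eval4_expand4 mulr_sumr.
rewrite exchange_big; apply: eq_bigr => l _; rewrite !mxE mulr_suml.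
by apply: eq_bigr => i _; rewrite !mxE; ring.
Qed.

End LorentzFrame.

Section NullJacobi.
Variables (R : realType) (n k : nat) (T : tensor4 R n.+2) (f : 'I_n.+2 -> 'rV[R]_n.+2).
Hypotheses (HT : alg_curv T) (Hf : lorentz_frame f) (Hk : (k <= n)%N).
Local Notation m := n.+2.
Local Notation i0 := (ord0 : 'I_m).
Local Notation i1 := (lift ord0 ord0 : 'I_m).
Local Notation u := (f i0 + f i1).
Local Notation v := (f i0 - f i1).

Lemma gmet_frame_neq a b : a != b -> gmet (f a) (f b) = 0.
Proof. by rewrite Hf => /negPf ->. Qed.

Lemma gmet_frame_diag a : gmet (f a) (f a) = msign a.
Proof. by rewrite Hf eqxx. Qed.

Lemma gmet_null_frame (a : 'I_m) : (2 <= a)%N -> gmet u (f a) = 0 /\ gmet v (f a) = 0.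
Proof.
move=> a_ge2; have a0 : i0 != a by rewrite -val_eqE /=; case: (val a) a_ge2.
have a1 : i1 != a by rewrite -val_eqE /=; case: (val a) a_ge2 => [|[]].
by rewrite !gmet_lin !gmet_frame_neq // subrr addr0.
Qed.

(* With l = e^t this is cosh t f_0 + sinh t f_1, a rational parametrization of the
   unit timelike vectors of the plane (f_0, f_1). *)
Definition boost (l : R) : 'rV[R]_m := (l / 2%:R) *: u + (l^-1 / 2%:R) *: v.

Lemma gmet_boost l : l != 0 -> gmet (boost l) (boost l) = -1.
Proof.
move=> l_neq0; rewrite /boost !gmet_lin !gmet_frame_diag !gmet_frame_neq //.
by rewrite /msign /=; field.
Qed.

Lemma gmet_boost_frame l (a : 'I_m) : (2 <= a)%N -> gmet (boost l) (f a) = 0.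
Proof. by move/gmet_null_frame => [gu gv]; rewrite gmetDl !gmetZl gu gv !mulr0 addr0. Qed.

Definition boost_frame l : 'M[R]_(k.+1, m) :=
  \matrix_r (if r == ord0 then boost l else f (inord r.+1)).

Let inord_frame_val (r : 'I_k.+1) : (inord r.+1 : 'I_m) = r.+1 :> nat :=
  inord_succ_val r Hk.

Lemma boost_frame_orthonormal l : l != 0 -> orthonormal_frame (boost_frame l).
Proof.
move=> l_neq0; have spatial (r : 'I_k.+1) : r != ord0 -> (2 <= (inord r.+1 : 'I_m))%N.
  by rewrite inord_frame_val -val_eqE /=; case: (val r).
split=> [r s rs|r]; rewrite gram_mxE !rowK.
  have [r0|r0] := eqVneq r ord0; have [s0|s0] := eqVneq s ord0.
  - by move: rs; rewrite r0 s0 eqxx.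
  - exact: gmet_boost_frame (spatial _ s0).
  - by rewrite gmetC; apply: gmet_boost_frame (spatial _ r0).
  apply: gmet_frame_neq.
  by rewrite -(inj_eq (@ord_inj m)) !inord_frame_val eqSS (inj_eq (@ord_inj _)).
have [r0|r0] := eqVneq r ord0; first by right; apply: gmet_boost.
by left; rewrite gmet_frame_diag msign_spacelike // inord_frame_val.
Qed.

Lemma jacobi_plane_boost l : l != 0 -> jacobi_plane T (boost_frame l) =
  l ^+ 2 *: (- 4%:R^-1 *: jacobi T u)
  + (- 4%:R^-1 *: jacobi_mixed T u v + \sum_(r < k) jacobi T (f (inord r.+2)))
  + l^-1 ^+ 2 *: (- 4%:R^-1 *: jacobi T v).
Proof.
move=> l_neq0; rewrite /jacobi_plane big_ord_recl !rowK eqxx gmet_boost // scaleN1r.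
under eq_bigr => r _.
  rewrite rowK /= /bump leq0n add1n gmet_frame_diag msign_spacelike ?scale1r; last first.
    by rewrite inordK //; have := ltn_ord r; lia.
  over.
rewrite /boost jacobi_combination.
(* Naming the Jacobi operators keeps mxE from unfolding them. *)
set Ju := jacobi T u; set Jv := jacobi T v; set Jm := jacobi_mixed T u v.
set Q := \sum_(r < k) _; apply/matrixP => i j; rewrite !mxE.
by field; rewrite ?pnatr_eq0.
Qed.

Lemma mxtrace_jacobi_null_sqr : \tr (jacobi T u *m jacobi T u) =
  \sum_(a : 'I_m | (2 <= a)%N) \sum_(b : 'I_m | (2 <= b)%N) eval4 T (f a) u u (f b) ^+ 2.
Proof.
set B := \matrix_(a, b) eval4 T (f a) u u (f b).
have B_sym a b : B a b = B b a by rewrite !mxE eval4_jacobi_sym.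
(* u is null, so rows 0 and 1 of B are opposite and cancel against the signs -1, 1. *)
have B_row01 b : B i0 b = - B i1 b.
  by apply/eqP; rewrite -addr_eq0 !mxE -eval4D1 eval4_diag12.
have drop01 (G : 'I_m -> R) : G i0 = G i1 ->
    \sum_a msign a * G a = \sum_(a : 'I_m | (2 <= a)%N) G a.
  move=> G01; rewrite (bigD1 i0) // (bigD1 i1) //= G01.
  rewrite [msign i0]/msign [msign i1]/msign /= mul1r mulN1r addKr.
  apply: eq_big => [a|a /andP[a0 _]]; first by rewrite -!val_eqE /=; case: (val a) => [|[]].
  by rewrite msign_spacelike ?mul1r //; move: a0; rewrite -val_eqE.
rewrite /jacobi -(mxtrace_sqr_frame Hf) /= -frame_mx_bilinear // -/B.
transitivity (\sum_a msign a * \sum_b msign b * B a b ^+ 2).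
  rewrite /mxtrace; apply: eq_bigr => a _; rewrite mxE mulr_sumr.
  apply: eq_bigr => b _; rewrite !mulmx_minkowski.
  by rewrite [B b a]B_sym; ring.
rewrite drop01; last by apply: eq_bigr => b _; rewrite B_row01 sqrrN.
apply: eq_bigr => a _; rewrite drop01; last first.
  by rewrite [B a i0]B_sym [B a i1]B_sym B_row01 sqrrN.
by apply: eq_bigr => b _; rewrite mxE.
Qed.

Theorem null_jacobi_eq0 :
  (exists b, forall E : 'M[R]_(k.+1, m), orthonormal_frame E ->
     `|\tr (jacobi_plane T E *m jacobi_plane T E)| <= b) ->
  forall a b : 'I_m, (2 <= a)%N -> (2 <= b)%N -> eval4 T (f a) u u (f b) = 0.
Proof.
move=> [B bounded] a b a_ge2 b_ge2.
have trPP : let P := - 4%:R^-1 *: jacobi T u in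
    \tr (P *m P) = 16%:R^-1 * \tr (jacobi T u *m jacobi T u).
  by rewrite /= -scalemxAl -scalemxAr scalerA mxtraceZ; congr (_ * _); field.
have squares_ge0 : 0 <= \tr (jacobi T u *m jacobi T u).
  by rewrite mxtrace_jacobi_null_sqr; do 2 (apply: sumr_ge0 => ? _); apply: sqr_ge0.
have : \tr ((- 4%:R^-1 *: jacobi T u) *m (- 4%:R^-1 *: jacobi T u)) = 0.
  pose Q := - 4%:R^-1 *: jacobi_mixed T u v + \sum_(r < k) jacobi T (f (inord r.+2)).
  apply: (mxtrace_laurent_sqr_eq0 (Q := Q) (S := - 4%:R^-1 *: jacobi T v) (b := B)).
    by rewrite trPP mulr_ge0 // invr_ge0.
  move=> l l_ge1.
  have l_neq0 : l != 0 by rewrite gt_eqF // (lt_le_trans ltr01 l_ge1).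
  by rewrite /= /Q -jacobi_plane_boost //; apply/bounded/boost_frame_orthonormal.
rewrite trPP => /eqP; rewrite mulf_eq0 invr_eq0 pnatr_eq0 /= mxtrace_jacobi_null_sqr.
move=> /eqP sum0.
have inner_ge0 (c : 'I_m) : (2 <= c)%N ->
    0 <= \sum_(d : 'I_m | (2 <= d)%N) eval4 T (f c) u u (f d) ^+ 2.
  by move=> _; apply: sumr_ge0 => ? _; apply: sqr_ge0.
have := psumr_eq0P (fun d _ => sqr_ge0 (eval4 T (f a) u u (f d)))
  (psumr_eq0P inner_ge0 sum0 a_ge2) b_ge2.
by move/eqP; rewrite sqrf_eq0 => /eqP.
Qed.

End NullJacobi.

(* The even and odd parts in e = 1, -1 of S(f_i, w, w, f_j) = 0 for the null vectors
   w = f_0 + e f_s of a Lorentz frame, with i, j off the plane (f_0, f_s). *)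
Definition null_frame_relations (R : realType) n (S : tensor4 R n.+1) :=
  forall f : 'I_n.+1 -> 'rV[R]_n.+1, lorentz_frame f ->
  forall s i j, s != ord0 -> i != ord0 -> i != s -> j != ord0 -> j != s ->
  eval4 S (f i) (f ord0) (f ord0) (f j) + eval4 S (f i) (f s) (f s) (f j) = 0 /\
  eval4 S (f i) (f ord0) (f s) (f j) + eval4 S (f i) (f s) (f ord0) (f j) = 0.

Section NullTransfer.
Variables (R : realType) (n k : nat) (T : tensor4 R n.+2).
Hypotheses (HT : alg_curv T) (Hk : (k <= n)%N).
Hypothesis bounded : exists b, forall E : 'M[R]_(k.+1, n.+2), orthonormal_frame E ->
  `|\tr (jacobi_plane T E *m jacobi_plane T E)| <= b.
Local Notation m := n.+2.
Local Notation i0 := (ord0 : 'I_m).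
Local Notation i1 := (lift ord0 ord0 : 'I_m).

Lemma null_jacobi_eq0_signed (f : 'I_m -> 'rV[R]_m) s i j (e : R) :
  lorentz_frame f -> s != i0 -> e * e = 1 ->
  i != i0 -> i != s -> j != i0 -> j != s ->
  eval4 T (f i) (f i0 + e *: f s) (f i0 + e *: f s) (f j) = 0.
Proof.
move=> Hf s0 ee i0' is' j0' js'.
(* f_0 + e f_s is the vector u of the frame relabelled by the transposition (1 s). *)
pose t := tperm i1 s; pose g a := (if a == i1 then e else 1) *: f (t a).
have msign_t a : msign (t a) = msign a.
  by rewrite /t; case: tpermP => [->|->|//]; rewrite !msign_neq_ord0.
have Hg : lorentz_frame g.
  move=> a b; rewrite /g gmetZl gmetZr Hf (inj_eq perm_inj) msign_t.
  have [->|_] := eqVneq a b; last by rewrite !mulr0.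
  by case: eqP => _; rewrite ?mul1r // mulrA ee mul1r.
have g0 : g i0 = f i0 by rewrite /g tpermD ?scale1r // eq_sym.
have g1 : g i1 = e *: f s by rewrite /g eqxx tpermL.
have g_back a : a != i0 -> a != s -> g (t a) = f a /\ (2 <= t a)%N.
  move=> a0 as'; have ta1 : t a != i1.
    by apply: contra as' => /eqP ta1; rewrite -(tpermK i1 s a) -/t ta1 tpermL.
  have ta0 : t a != i0.
    by apply: contra a0 => /eqP ta0; rewrite -(tpermK i1 s a) -/t ta0 tpermD // eq_sym.
  split; first by rewrite /g (negPf ta1) scale1r tpermK.
  by move: ta0 ta1; rewrite -!(inj_eq val_inj) /=; case: (val (t a)) => [|[]].
have [gi ti_ge2] := g_back i i0' is'; have [gj tj_ge2] := g_back j j0' js'.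
by have := null_jacobi_eq0 HT Hg Hk bounded ti_ge2 tj_ge2; rewrite gi gj g0 g1.
Qed.

Lemma null_frame_relations_osserman : null_frame_relations T.
Proof.
move=> f Hf s i j s0 i0' is' j0' js'.
have := null_jacobi_eq0_signed Hf s0 (mulr1 1) i0' is' j0' js'.
have nn : (-1) * (-1) = 1 :> R by rewrite mulrNN mulr1.
have := null_jacobi_eq0_signed Hf s0 nn i0' is' j0' js'.
rewrite !eval4_lin => minus plus; split; lra.
Qed.

End NullTransfer.

Section UnitCurvature.
Variables (R : realType) (m : nat).
Local Notation eta := (minkowski R m).
Implicit Types (x y z w : 'rV[R]_m) (T : tensor4 R m).

Definition unit_curv : tensor4 R m :=
  fun a b c d => eta a d * eta b c - eta a c * eta b d.

Lemma eval4_unit_curv x y z w :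
  eval4 unit_curv x y z w = gmet x w * gmet y z - gmet x z * gmet y w.
Proof.
have eta_collapse (F : 'I_m -> R) a : \sum_l F l * eta a l = F a * msign a.
  rewrite (bigD1 a) //= big1 ?addr0 => [|l /negPf la]; first by rewrite minkowskiE eqxx.
  by rewrite minkowskiE eq_sym la mulr0.
rewrite eval4_nested.
transitivity (\sum_i x 0 i * (\sum_j y 0 j *
   (z 0 j * msign j * (w 0 i * msign i) - z 0 i * msign i * (w 0 j * msign j)))).
  apply: eq_bigr => i _; congr (_ * _); apply: eq_bigr => j _; congr (_ * _).
  transitivity (\sum_k z 0 k * (eta j k * (w 0 i * msign i) - eta i k * (w 0 j * msign j))).
    apply: eq_bigr => k _; congr (_ * _).
    transitivity (\sum_l (eta j k * (w 0 l * eta i l) - eta i k * (w 0 l * eta j l))).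
      by apply: eq_bigr => l _; rewrite /unit_curv; ring.
    by rewrite sumrB -!mulr_sumr !eta_collapse.
  transitivity (\sum_k ((w 0 i * msign i) * (z 0 k * eta j k)
                        - (w 0 j * msign j) * (z 0 k * eta i k))).
    by apply: eq_bigr => k _; ring.
  by rewrite sumrB -!mulr_sumr !eta_collapse; ring.
rewrite !gmetE !mulr_suml -sumrB; apply: eq_bigr => i _.
by rewrite !big_distrr /= -sumrB; apply: eq_bigr => j _; ring.
Qed.

Lemma alg_curv_unit_curv : alg_curv unit_curv.
Proof.
split=> a b c d; rewrite /unit_curv; try ring.
  by rewrite (minkowski_sym c b) (minkowski_sym d a) (minkowski_sym c a) (minkowski_sym d b); ring.
by rewrite (minkowski_sym c a) (minkowski_sym b a) (minkowski_sym c b); ring.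
Qed.

Definition curv_shift T (c : R) : tensor4 R m :=
  fun a b c' d => T a b c' d - c * unit_curv a b c' d.

Lemma eval4_curv_shift T c x y z w :
  eval4 (curv_shift T c) x y z w = eval4 T x y z w - c * eval4 unit_curv x y z w.
Proof.
rewrite /eval4 mulr_sumr -sumrB; apply: eq_bigr => i _.
rewrite mulr_sumr -sumrB; apply: eq_bigr => j _.
rewrite mulr_sumr -sumrB; apply: eq_bigr => k _.
by rewrite mulr_sumr -sumrB; apply: eq_bigr => l _; rewrite /curv_shift; ring.
Qed.

Lemma alg_curv_shift T c : alg_curv T -> alg_curv (curv_shift T c).
Proof.
case: alg_curv_unit_curv => G12 G34 Gpair GB [A12 A34 Apair AB].
split=> a b c' d; rewrite /curv_shift.
- by rewrite A12 G12; ring.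
- by rewrite A34 G34; ring.
- by rewrite Apair Gpair.
transitivity ((T a b c' d + T b c' a d + T c' a b d)
  - c * (unit_curv a b c' d + unit_curv b c' a d + unit_curv c' a b d)); first by ring.
by rewrite AB GB mulr0 subr0.
Qed.

End UnitCurvature.

Arguments unit_curv {R m}.

Lemma null_frame_relations_shift (R : realType) n (T : tensor4 R n.+1) c :
  null_frame_relations T -> null_frame_relations (curv_shift T c).
Proof.
move=> rel f Hf s i j s0 i0 is' j0 js'.
have [rel1 rel2] := rel f Hf s i j s0 i0 is' j0 js'.
have orth a b : a != b -> gmet (f a) (f b) = 0 by move=> /negPf ab; rewrite Hf ab.
have g00 : gmet (f ord0) (f ord0) = -1 by rewrite Hf eqxx.
have gss : gmet (f s) (f s) = 1 by rewrite Hf eqxx msign_neq_ord0.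
rewrite !eval4_curv_shift !eval4_unit_curv g00 gss (orth i ord0) // (orth i s) //.
rewrite (orth ord0 j) 1?eq_sym // (orth s j) 1?eq_sym // (orth s ord0) //.
rewrite (orth ord0 s) 1?eq_sym //; split; lra.
Qed.

Section AlgCurvIndices.
Variables (R : realType) (m : nat) (S : tensor4 R m).
Hypothesis HS : alg_curv S.

Lemma alg_curv_diag12 a c d : S a a c d = 0.
Proof.
case: HS => A12 _ _ _; have /eqP := A12 a a c d.
by rewrite -addr_eq0 -mulr2n mulrn_eq0 => /eqP.
Qed.

Lemma alg_curv_diag34 a b c : S a b c c = 0.
Proof.
case: HS => _ A34 _ _; have /eqP := A34 a b c c.
by rewrite -addr_eq0 -mulr2n mulrn_eq0 => /eqP.
Qed.

Lemma alg_curv_jacobi_sym a b d : S a b b d = S d b b a.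
Proof. by case: HS => A12 A34 Apair _; rewrite Apair A12 A34 opprK. Qed.

(* The hypotheses turn the first Bianchi identity into 3 S a b c d = 0. *)
Lemma alg_curv_eq0_of_mid_antisym a b c d :
  S a b c d + S a c b d = 0 -> S c a b d + S c b a d = 0 -> S a b c d = 0.
Proof.
case: HS => A12 _ _ AB mid_abc mid_cab.
have := AB a b c d; have := A12 b c a d; have := A12 a c b d; lra.
Qed.

End AlgCurvIndices.

Section Vanishing.
Variables (R : realType) (n : nat).
Local Notation m := n.+3.
Local Notation e i := (delta_mx 0 i : 'rV[R]_m).
Local Notation z := (ord0 : 'I_m).
Definition ord_1 : 'I_m := Ordinal (isT : (1 < n.+3)%N).
Definition ord_2 : 'I_m := Ordinal (isT : (2 < n.+3)%N).

Lemma lorentz_frame_delta : lorentz_frame (fun a : 'I_m => e a).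
Proof. by move=> a b; rewrite gmet_delta. Qed.

(* The rotation of the plane (e_p, e_q) with cosine 3/5 keeps the frame rational. *)
Definition rot_frame (p q a : 'I_m) : 'rV[R]_m :=
  if a == p then (3%:R / 5%:R) *: e p + (4%:R / 5%:R) *: e q
  else if a == q then (- (4%:R / 5%:R)) *: e p + (3%:R / 5%:R) *: e q else e a.

Section Rotation.
Variables (p q : 'I_m).
Hypotheses (p0 : p != z) (q0 : q != z) (pq : p != q).
Let qp : q != p. Proof. by rewrite eq_sym. Qed.
Let mp : msign p = 1 :> R. Proof. exact: msign_neq_ord0. Qed.
Let mq : msign q = 1 :> R. Proof. exact: msign_neq_ord0. Qed.
Let vp := (3%:R / 5%:R) *: e p + (4%:R / 5%:R) *: e q.
Let vq := (- (4%:R / 5%:R)) *: e p + (3%:R / 5%:R) *: e q.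
Let gmet_rot := (gmet_lin, gmet_delta, eqxx, negPf pq, negPf qp, mp, mq).

Let gmet_vp : gmet vp vp = 1. Proof. by rewrite /vp !gmet_rot; field. Qed.
Let gmet_vq : gmet vq vq = 1. Proof. by rewrite /vq !gmet_rot; field. Qed.
Let gmet_vpq : gmet vp vq = 0. Proof. by rewrite /vp /vq !gmet_rot; field. Qed.
Let gmet_vx x : x != p -> x != q -> gmet vp (e x) = 0 /\ gmet vq (e x) = 0.
Proof.
move=> xp xq; rewrite /vp /vq !gmet_rot.
by rewrite ![p == x]eq_sym ![q == x]eq_sym (negPf xp) (negPf xq) !mulr0 addr0.
Qed.

Lemma lorentz_rot_frame : lorentz_frame (rot_frame p q).
Proof.
move=> a b; rewrite /rot_frame -/vp -/vq.
case: (a =P p) => [-> | /eqP ap]; case: (b =P p) => [-> | /eqP bp].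
- by rewrite eqxx gmet_vp mp.
- rewrite [p == b]eq_sym (negPf bp); case: (b =P q) => [_ | /eqP bq].
    exact: gmet_vpq.
  by case: (gmet_vx bp bq).
- rewrite (negPf ap); case: (a =P q) => [_ | /eqP aq]; first by rewrite gmetC gmet_vpq.
  by rewrite gmetC; case: (gmet_vx ap aq).
case: (a =P q) => [-> | /eqP aq]; case: (b =P q) => [-> | /eqP bq].
- by rewrite eqxx gmet_vq mq.
- by rewrite [q == b]eq_sym (negPf bq); case: (gmet_vx bp bq).
- by rewrite (negPf aq) gmetC; case: (gmet_vx ap aq).
by rewrite gmet_delta.
Qed.

End Rotation.

Variables (S : tensor4 R m).
Hypotheses (HS : alg_curv S) (Hrel : null_frame_relations S).
Hypothesis Hnorm : S ord_1 ord_2 ord_2 ord_1 = 0.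

Let A12 := let: And4 h _ _ _ := HS in h.
Let A34 := let: And4 _ h _ _ := HS in h.
Let Apair := let: And4 _ _ h _ := HS in h.

Let rel_time s i j : s != z -> i != z -> i != s -> j != z -> j != s ->
  S i z z j + S i s s j = 0.
Proof.
move=> s0 i0 is' j0 js'.
by have [h _] := Hrel lorentz_frame_delta s0 i0 is' j0 js'; rewrite !eval4_delta in h.
Qed.

Let rel_mixed s i j : s != z -> i != z -> i != s -> j != z -> j != s ->
  S i z s j + S i s z j = 0.
Proof.
move=> s0 i0 is' j0 js'.
by have [_ h] := Hrel lorentz_frame_delta s0 i0 is' j0 js'; rewrite !eval4_delta in h.
Qed.

(* The relations make every S p 0 0 p equal to - S 1 2 2 1. *)
Lemma null_rel_time_diag p : p != z -> S p z z p = 0.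
Proof.
have same a b : a != z -> b != z -> a != b -> S a z z a = S b z z b.
  move=> a0 b0 ab; have ba : b != a by rewrite eq_sym.
  have := rel_time b0 a0 ab a0 ab; have := rel_time a0 b0 ba b0 ba.
  rewrite (Apair b a a b); lra.
have S1 : S ord_1 z z ord_1 = 0.
  by have := @rel_time ord_2 ord_1 ord_1 isT isT isT isT isT; rewrite Hnorm addr0.
by move=> p0; have [->//|p1] := eqVneq p ord_1; rewrite (same p ord_1).
Qed.

Lemma null_rel_time_offdiag p q : p != z -> q != z -> p != q -> S p z z q = 0.
Proof.
move=> p0 q0 pq; have qp : q != p by rewrite eq_sym.
have Hf := lorentz_rot_frame p0 q0 pq.
have [hp _] := Hrel Hf q0 p0 pq p0 pq; have [hq _] := Hrel Hf p0 q0 qp q0 qp.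
set f := rot_frame p q in hp hq.
have pair := eval4_pair_sym HS (f p) (f q) (f q) (f p).
have same_diag : eval4 S (f p) (f z) (f z) (f p) = eval4 S (f q) (f z) (f z) (f q) by lra.
move: same_diag; rewrite /f /rot_frame !eqxx (negPf qp) eq_sym (negPf p0) eq_sym (negPf q0).
rewrite !eval4_lin !eval4_delta !null_rel_time_diag // (alg_curv_jacobi_sym HS q z p).
lra.
Qed.

Lemma null_rel_time a d : S a z z d = 0.
Proof.
have [->|a0] := eqVneq a z; first exact: alg_curv_diag12.
have [->|d0] := eqVneq d z; first exact: alg_curv_diag34.
have [->|ad] := eqVneq a d; first exact: null_rel_time_diag.
exact: null_rel_time_offdiag.
Qed.

Lemma null_rel_jacobi a b d : S a b b d = 0.
Proof.
have [->|b0] := eqVneq b z; first exact: null_rel_time.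
have [->|ab] := eqVneq a b; first exact: alg_curv_diag12.
have [->|db] := eqVneq d b; first exact: alg_curv_diag34.
have from_time d' : d' != b -> S z b b d' = 0.
  move=> d'b; have [->|d'0] := eqVneq d' z; first by rewrite Apair null_rel_time.
  have bd' : b != d' by rewrite eq_sym.
  have := rel_mixed d'0 b0 bd' b0 bd'.
  rewrite (Apair b d' z b) (Apair b z d' b) (alg_curv_jacobi_sym HS d'); lra.
have [->|a0] := eqVneq a z; first exact: from_time.
have [->|d0] := eqVneq d z; first by rewrite (alg_curv_jacobi_sym HS) from_time.
have := rel_time b0 a0 ab d0 db; rewrite null_rel_time; lra.
Qed.

Lemma null_rel_mid_spatial i s t j : i != z -> s != z -> t != z -> j != z ->
  i != s -> i != t -> i != j -> s != t -> s != j -> t != j ->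
  S i s t j + S i t s j = 0.
Proof.
move=> i0 s0 t0 j0 is' it ij st sj tj.
have js : j != s by rewrite eq_sym. have jt : j != t by rewrite eq_sym.
have [h _] := Hrel (lorentz_rot_frame s0 t0 st) s0 i0 is' j0 js.
move: h; rewrite /rot_frame eqxx (negPf is') (negPf it) (negPf js) (negPf jt).
rewrite eq_sym (negPf s0) eq_sym (negPf t0) !eval4_lin !eval4_delta.
rewrite !null_rel_jacobi; lra.
Qed.

Lemma null_rel_spatial a b c d : a != z -> b != z -> c != z -> d != z ->
  a != b -> a != c -> a != d -> b != c -> b != d -> c != d -> S a b c d = 0.
Proof.
move=> a0 b0 c0 d0 ab ac ad bc bd cd.
have ca : c != a by rewrite eq_sym. have cb : c != b by rewrite eq_sym.
have ba : b != a by rewrite eq_sym.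
apply: (alg_curv_eq0_of_mid_antisym HS); first exact: null_rel_mid_spatial.
exact: null_rel_mid_spatial.
Qed.

Lemma null_rel_mid_time a c d : a != z -> c != z -> d != z ->
  a != c -> a != d -> c != d -> S a z c d = 0.
Proof.
move=> a0 c0 d0 ac ad cd; have ca : c != a by rewrite eq_sym.
have da : d != a by rewrite eq_sym. have dc : d != c by rewrite eq_sym.
apply: (alg_curv_eq0_of_mid_antisym HS); first exact: rel_mixed.
by rewrite addrC; apply: rel_mixed.
Qed.

Theorem null_relations_vanish a b c d : S a b c d = 0.
Proof.
have [->|ab] := eqVneq a b; first exact: alg_curv_diag12.
have [->|cd] := eqVneq c d; first exact: alg_curv_diag34.
have [->|bc] := eqVneq b c; first exact: null_rel_jacobi.
have [->|ad] := eqVneq a d; first by rewrite Apair null_rel_jacobi.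
have [->|ac] := eqVneq a c; first by rewrite A34 Apair null_rel_jacobi oppr0.
have [->|bd] := eqVneq b d; first by rewrite A12 Apair null_rel_jacobi oppr0.
have [a_z|a0] := eqVneq a z.
  by subst a; rewrite A12 null_rel_mid_time ?oppr0 //; rewrite eq_sym.
have [b_z|b0] := eqVneq b z; first by subst b; rewrite null_rel_mid_time //; rewrite eq_sym.
have [c_z|c0] := eqVneq c z.
  by subst c; rewrite A34 Apair null_rel_mid_time ?oppr0 //; rewrite eq_sym.
have [d_z|d0] := eqVneq d z.
  by subst d; rewrite Apair null_rel_mid_time //; rewrite eq_sym.
exact: null_rel_spatial.
Qed.

End Vanishing.

Arguments ord_1 {n}.
Arguments ord_2 {n}.

Lemma eigenvalueC_diagP (R : realType) m (A : 'M[R]_m) z :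
  is_diag_mx A -> reflect (exists i, z = (A i i)%:C%C) (eigenvalueC A z).
Proof.
move=> /is_diag_mxP Adiag; rewrite eigenvalueC_map eigenvalue_root_char.
rewrite char_poly_trig; last first.
  by apply/is_diag_mx_is_trig/is_diag_mxP => i j ij; rewrite mxE Adiag ?raddf0.
rewrite rootE horner_prod; apply: (iffP (prodf_eq0 _ _)) => [[i _]|[i ->]].
  by rewrite hornerXsubC subr_eq0 mxE => /eqP ->; exists i.
by exists i => //; rewrite hornerXsubC mxE subrr.
Qed.

Lemma isospectral_trace_bounded (R : realType) n p (T : tensor4 R n.+1)
    (E0 : 'M[R]_(p, n.+1)) :
  (forall E : 'M[R]_(p, n.+1), orthonormal_frame E -> forall z,
     eigenvalueC (jacobi_plane T E) z = eigenvalueC (jacobi_plane T E0) z) ->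
  exists b, forall E : 'M[R]_(p, n.+1), orthonormal_frame E ->
    `|\tr (jacobi_plane T E *m jacobi_plane T E)| <= b.
Proof.
move=> iso; pose chi := map_poly (real_complex R) (char_poly (jacobi_plane T E0)).
have chi_neq0 : chi != 0 by rewrite map_poly_eq0 monic_neq0 ?char_poly_monic.
have [b bound] := mxtrace_sqr_bounded_real n chi_neq0.
by exists b => E HE; apply: bound => z; rewrite iso.
Qed.

Lemma eq_of_natmul_choices (R : realFieldType) (k : nat) (x y : R) :
  k.+1%:R * x = k.+1%:R * y \/ k.+1%:R * x = k%:R * y ->
  k.+1%:R * y = k.+1%:R * x \/ k.+1%:R * y = k%:R * x -> x = y.
Proof.
have k_ge0 : 0 <= k%:R :> R by [].
rewrite -natr1; case=> exy; case=> eyx; nra.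
Qed.

Section PointwiseOsserman.
Variables (R : realType) (n k : nat).
Hypothesis Hk : (k <= n.+1)%N.
Local Notation m := n.+3.
Local Notation e i := (delta_mx 0 i : 'rV[R]_m).

Theorem osserman_point_unit_curv (T : tensor4 R m) : alg_curv T ->
  (exists b, forall E : 'M[R]_(k.+1, m), orthonormal_frame E ->
     `|\tr (jacobi_plane T E *m jacobi_plane T E)| <= b) ->
  forall a b c d, T a b c d = T ord_1 ord_2 ord_2 ord_1 * unit_curv a b c d.
Proof.
move=> HT bounded a b c d; set c0 := T ord_1 ord_2 ord_2 ord_1.
have rel := null_frame_relations_shift c0 (null_frame_relations_osserman HT Hk bounded).
have norm : curv_shift T c0 ord_1 ord_2 ord_2 ord_1 = 0.
  by rewrite /curv_shift /unit_curv !minkowskiE /= /msign /= /c0; ring.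
have /eqP := null_relations_vanish (alg_curv_shift c0 HT) rel norm a b c d.
by rewrite /curv_shift subr_eq0 => /eqP.
Qed.

Definition spatial_frame : 'M[R]_(k.+1, m) := \matrix_r e (inord r.+1).

Let spatial_frame_val (r : 'I_k.+1) : (inord r.+1 : 'I_m) = r.+1 :> nat :=
  inord_succ_val r Hk.

Lemma spatial_frame_orthonormal : orthonormal_frame spatial_frame.
Proof.
split=> [r s rs|r]; rewrite gram_mxE !rowK gmet_delta.
  by rewrite -(inj_eq (@ord_inj m)) !spatial_frame_val eqSS (inj_eq (@ord_inj _)) (negPf rs).
by left; rewrite eqxx msign_spacelike // spatial_frame_val.
Qed.

Lemma spatial_frame_inj : injective (fun r : 'I_k.+1 => inord r.+1 : 'I_m).
Proof.
move=> r s rs; apply/ord_inj.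
by have := congr1 (@nat_of_ord m) rs; rewrite !spatial_frame_val => -[].
Qed.

Lemma spatial_indicator_sum (i : 'I_m) :
  let s := \sum_(r < k.+1) (i == inord r.+1)%:R in s = 0 :> R \/ s = 1.
Proof.
case: (boolP [exists r : 'I_k.+1, i == inord r.+1]) => [/existsP [r /eqP ir]|].
  right; rewrite /= (bigD1 r) //= ir eqxx big1 ?addr0 // => s sr.
  by rewrite (inj_eq spatial_frame_inj) eq_sym (negPf sr).
by rewrite negb_exists => /forallP none; left; apply: big1 => r _; rewrite (negPf (none r)).
Qed.

Section UnitCurvJacobi.
Variables (T : tensor4 R m) (c : R).
Hypothesis HTc : forall a b c' d, T a b c' d = c * unit_curv a b c' d.

Lemma jacobi_plane_unit_curv i l : jacobi_plane T spatial_frame i l =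
  if i == l then c * (k.+1%:R - \sum_(r < k.+1) (i == inord r.+1)%:R) else 0.
Proof.
have sp (r : 'I_k.+1) : msign (inord r.+1 : 'I_m) = 1 :> R.
  by rewrite msign_spacelike // spatial_frame_val.
rewrite jacobi_planeE.
under eq_bigr => r _ do rewrite rowK gmet_delta eqxx sp mul1r jacobiE eval4_delta HTc.
have [<-|il] := eqVneq i l.
  have -> : k.+1%:R = \sum_(r < k.+1) 1 :> R by rewrite sumr_const card_ord.
  rewrite -sumrB mulr_sumr; apply: eq_bigr => r _.
  rewrite /unit_curv !minkowskiE !eqxx sp; case: (i =P inord r.+1) => [<-|/eqP ir].
    by rewrite eqxx /=; ring.
  by rewrite [inord r.+1 == i]eq_sym (negPf ir) /= mul0r !subr0 mulr1 -mulrA msign_sqr.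
apply: big1 => r _; rewrite /unit_curv !minkowskiE (negPf il).
by case: (i =P inord r.+1) => [<-|_]; rewrite ?(negPf il); ring.
Qed.

Lemma jacobi_plane_unit_curv_diag : is_diag_mx (jacobi_plane T spatial_frame).
Proof.
by apply/is_diag_mxP => i l il; rewrite jacobi_plane_unit_curv -(inj_eq (@ord_inj _)) (negPf il).
Qed.

Lemma unit_curv_eigenvalue_top :
  eigenvalueC (jacobi_plane T spatial_frame) (k.+1%:R * c)%:C%C.
Proof.
apply/eigenvalueC_diagP; first exact: jacobi_plane_unit_curv_diag.
exists ord0; rewrite jacobi_plane_unit_curv eqxx big1 ?subr0 ?(mulrC c) // => r _.
by rewrite -(inj_eq (@ord_inj m)) spatial_frame_val.
Qed.

Lemma unit_curv_eigenvalues z : eigenvalueC (jacobi_plane T spatial_frame) z ->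
  z = (k.+1%:R * c)%:C%C \/ z = (k%:R * c)%:C%C.
Proof.
case/(eigenvalueC_diagP _ jacobi_plane_unit_curv_diag) => i ->.
rewrite jacobi_plane_unit_curv eqxx; case: (spatial_indicator_sum i) => ->.
  by left; rewrite subr0 mulrC.
by right; rewrite -natr1 addrK mulrC.
Qed.

End UnitCurvJacobi.

Lemma unit_curv_isospectral_eq (T1 T2 : tensor4 R m) c1 c2 :
  (forall a b c d, T1 a b c d = c1 * unit_curv a b c d) ->
  (forall a b c d, T2 a b c d = c2 * unit_curv a b c d) ->
  (forall z, eigenvalueC (jacobi_plane T1 spatial_frame) z =
             eigenvalueC (jacobi_plane T2 spatial_frame) z) ->
  c1 = c2.
Proof.
move=> HT1 HT2 iso; apply: (@eq_of_natmul_choices _ k).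
  have := unit_curv_eigenvalue_top HT1; rewrite iso.
  by case/(unit_curv_eigenvalues HT2) => /complexI ->; [left | right].
have := unit_curv_eigenvalue_top HT2; rewrite -iso.
by case/(unit_curv_eigenvalues HT1) => /complexI ->; [left | right].
Qed.

End PointwiseOsserman.

Lemma sectional_curvature_unit_curv (R : realType) m (T : tensor4 R m) c x y :
  (forall a b c' d, T a b c' d = c * unit_curv a b c' d) ->
  plane_det x y != 0 -> sectional_curvature T x y = c.
Proof.
move=> HTc det_neq0; rewrite /sectional_curvature.
have -> : eval4 T x y y x = c * eval4 unit_curv x y y x.
  rewrite /eval4 !mulr_sumr; apply: eq_bigr => a _; rewrite !mulr_sumr.
  apply: eq_bigr => b _; rewrite !mulr_sumr; apply: eq_bigr => c' _.
  by rewrite !mulr_sumr; apply: eq_bigr => d _; rewrite HTc; ring.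
by rewrite eval4_unit_curv (gmetC y x) -expr2 -/(plane_det x y) -mulrA divff // mulr1.
Qed.

Theorem theorem1p3 (R : realType) (m : nat) (M : Type)
    (Rm : M -> tensor4 R m) (k : nat) :
  (3 <= m)%N -> (1 <= k <= m.-1)%N ->
  (forall P : M, alg_curv (Rm P)) ->
  k_osserman Rm k ->
  constant_sectional_curvature Rm.
Proof.
case: m Rm => [|[|[|n]]] Rm // _; case: k => [|k] // /andP[_ Hk] HT Hos.
have {}Hk : (k <= n.+1)%N := Hk.
have frame0 := spatial_frame_orthonormal R Hk.
pose c P := Rm P ord_1 ord_2 ord_2 ord_1.
have curv P a b c' d : Rm P a b c' d = c P * unit_curv a b c' d.
  apply: (osserman_point_unit_curv Hk (HT P)).
  apply: (isospectral_trace_bounded (E0 := spatial_frame R n k)) => E HE.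
  exact: Hos HE frame0.
have c_const P Q : c P = c Q.
  apply: (unit_curv_isospectral_eq Hk (curv P) (curv Q)) => z.
  exact: (Hos P Q _ _ frame0 frame0 z).
(* M may be empty. *)
have [[P0 _]|noM] := classic (exists P : M, True); last first.
  by exists 0 => P; case: noM; exists P.
exists (c P0) => P x y det_neq0; rewrite (c_const P0 P).
exact: sectional_curvature_unit_curv (curv P) det_neq0.
Qed.
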